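(* Let $\Pi$ be the set of graphs $G$ satisfying $\sum_{H:|V(H)|=4} w_H\cdot p(H,G)\le \frac{5}{16}$, where the weights are $w_{K_4}=1$, $w_{\bar{K_4}}=\frac12$, $w_{D_4}=\frac{5}{12}$, $w_{\bar{D_4}}=\frac{5}{12}$, $w_{P_3}=\frac13$, $w_{\bar{P_3}}=\frac16$, $w_{C_4}=\frac12$, $w_{\bar{C_4}}=\frac13$, $w_{K_{1,3}}=\frac14$, $w_{\bar{K_{1,3}}}=\frac14$, $w_{P_4}=\frac14$. Then $\Pi=\{G:\phi(G)\le 0\}$, where $\phi(G)=2\,t_{\mathrm{inj}}(C_4,G)-t_{\mathrm{inj}}(K_2,G)+\frac38$.
   Context: $K_4$ is the complete graph on 4 vertices, $D_4$ is $K_4$ minus an edge, $P_3$ is the 4-vertex graph consisting of a path on 3 vertices plus an isolated vertex, $C_4$ the 4-cycle, $P_4$ the path on 4 vertices, $K_{1,3}$ the star on 4 vertices, $K_2$ a single edge, and $\bar H$ the complement of $H$. $p(H,G)$ is the fraction of induced subgraphs of $G$ on $|V(H)|$ vertices isomorphic to $H$. For graphs $H$ on $h$ vertices and $G$ on $n$ vertices, $t_{\mathrm{inj}}(H,G)$ is the number of injective maps $\varphi:V(H)\to V(G)$ such that $uv\in E(H)$ implies $\varphi(u)\varphi(v)\in E(G)$, divided by $n(n-1)\cdots(n-h+1)$. *)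

(* Finite simple graphs G = (T, e) with e symmetric and
   irreflexive; small pattern graphs H on vertex set 'I_h. Densities in rat. *)
From HB Require Import structures.
From mathcomp Require Import all_boot all_order all_algebra.
Set Implicit Arguments. Unset Strict Implicit. Unset Printing Implicit Defensive.
Import Order.TTheory GRing.Theory Num.Theory.
Local Open Scope ring_scope.

Definition mkG (h : nat) (s : seq (nat * nat)) : rel 'I_h :=
  fun i j => (i != j) &&
    ((((i : nat), (j : nat)) \in s) || (((j : nat), (i : nat)) \in s)).

Definition complG (h : nat) (H : rel 'I_h) : rel 'I_h :=
  fun i j => (i != j) && ~~ H i j.

Definition K4  : rel 'I_4 := mkG [:: (0,1); (0,2); (0,3); (1,2); (1,3); (2,3)]%N.
Definition D4  : rel 'I_4 := mkG [:: (0,1); (0,2); (0,3); (1,2); (1,3)]%N.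
Definition P3  : rel 'I_4 := mkG [:: (0,1); (1,2)]%N.  (* path on 3 vertices + isolated vertex *)
Definition C4  : rel 'I_4 := mkG [:: (0,1); (1,2); (2,3); (3,0)]%N.
Definition P4  : rel 'I_4 := mkG [:: (0,1); (1,2); (2,3)]%N.
Definition K13 : rel 'I_4 := mkG [:: (0,1); (0,2); (0,3)]%N.
Definition K2  : rel 'I_2 := mkG [:: (0,1)]%N.

Definition induced_iso (T : finType) (e : rel T) (h : nat) (H : rel 'I_h)
    (S : {set T}) : bool :=
  [exists f : {ffun 'I_h -> T},
     [&& injectiveb f, f @: setT == S &
         [forall i, forall j, H i j == e (f i) (f j)]]].

Definition p_ind (T : finType) (e : rel T) (h : nat) (H : rel 'I_h) : rat :=
  (#|[set S : {set T} | (#|S| == h) && induced_iso e H S]|)%:R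
    / ('C(#|T|, h))%:R.

Definition t_inj (T : finType) (e : rel T) (h : nat) (H : rel 'I_h) : rat :=
  (#|[set f : {ffun 'I_h -> T} | injectiveb f &&
       [forall u, forall v, H u v ==> e (f u) (f v)]]|)%:R
    / ((#|T| ^_ h)%N)%:R.

Definition wsum (T : finType) (e : rel T) : rat :=
    1 * p_ind e K4 + (1/2) * p_ind e (complG K4)
  + (5/12) * p_ind e D4 + (5/12) * p_ind e (complG D4)
  + (1/3) * p_ind e P3 + (1/6) * p_ind e (complG P3)
  + (1/2) * p_ind e C4 + (1/3) * p_ind e (complG C4)
  + (1/4) * p_ind e K13 + (1/4) * p_ind e (complG K13)
  + (1/4) * p_ind e P4.

Definition phi (T : finType) (e : rel T) : rat :=
  2 * t_inj e C4 - t_inj e K2 + 3/8.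

(* Pull G back along an injective 4-tuple f of its vertices to a labelled graph c on 'I_4.
   Every labelled graph c on four vertices satisfies
     48 sum_H w_H [c ~ H] + #{s in S_4 | c (s 0) (s 1)} = 24 + 2 #{s in S_4 | C_4 <= c o s},
   which is checked on all 64 of them.  Summed over all injective f, the indicators [c ~ H]
   add up to 4! times the number of induced copies of H, the counts over S_4 to 4! times the
   numbers of injective homomorphisms, and each injective pair extends to (n-2)(n-3)
   injective 4-tuples.  Dividing by n(n-1)(n-2)(n-3) gives
     48 wsum(G) + 24 t_inj(K_2, G) = 24 + 48 t_inj(C_4, G),  i.e.  wsum(G) = phi(G)/2 + 5/16. *)

From HB Require Import structures.
From mathcomp Require Import all_boot all_order all_algebra.
From mathcomp Require Import ring lra zify.
From Stdlib Require Import FunctionalExtensionality.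
Import Order.TTheory GRing.Theory Num.Theory.
Set Implicit Arguments. Unset Strict Implicit. Unset Printing Implicit Defensive.

Section LabelledGraphs.

Variable h : nat.

Definition pullback (T : Type) (e : rel T) (f : 'I_h -> T) : rel 'I_h :=
  fun i j => e (f i) (f j).

Definition subgraphb (H c : rel 'I_h) : bool := [forall u, forall v, H u v ==> c u v].

Definition eqrelb (H c : rel 'I_h) : bool := [forall u, forall v, H u v == c u v].

Definition isomorphicb (H c : rel 'I_h) : bool :=
  [exists s : {ffun 'I_h -> 'I_h}, injectiveb s && eqrelb H (pullback c s)].

Definition inj_count (T : finType) (X : pred (rel 'I_h)) (e : rel T) : nat :=
  \sum_(f : {ffun 'I_h -> T} | injectiveb f) X (pullback e f).

Lemma eq_pullback (T : Type) (e : rel T) (f g : 'I_h -> T) :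
  f =1 g -> pullback e f = pullback e g.
Proof.
move=> fg; apply: functional_extensionality => i.
by apply: functional_extensionality => j; rewrite /pullback !fg.
Qed.

Lemma card_inj_pullback (T : finType) (X : pred (rel 'I_h)) (e : rel T) :
  #|[set f : {ffun 'I_h -> T} | injectiveb f && X (pullback e f)]| = inj_count X e.
Proof.
rewrite -sum1dep_card /inj_count big_mkcondr /=.
by apply: eq_bigr => f _; case: (X _).
Qed.

Lemma isomorphicbE (H c : rel 'I_h) : isomorphicb H c = (0 < inj_count (eqrelb H) c)%N.
Proof.
rewrite -card_inj_pullback.
by apply/existsP/card_gt0P => -[s s_iso]; exists s; rewrite ?inE in s_iso *.
Qed.

Lemma card_inj_perm : #|[set s : {ffun 'I_h -> 'I_h} | injectiveb s]| = h`!.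
Proof. by rewrite card_inj_ffuns card_ord ffactnn. Qed.

Lemma sum_inj_precomp (T : finType) (F : {ffun 'I_h -> T} -> nat) (s : 'I_h -> 'I_h) :
  injective s ->
  \sum_(f : {ffun 'I_h -> T} | injectiveb f) F [ffun i => f (s i)] =
  \sum_(f : {ffun 'I_h -> T} | injectiveb f) F f.
Proof.
move=> s_inj; have [s' sK s'K] := injF_bij s_inj.
have s'_inj := can_inj s'K.
pose pre (g : 'I_h -> 'I_h) (f : {ffun 'I_h -> T}) := [ffun i => f (g i)].
rewrite (reindex (pre s')) /=; last first.
  by exists (pre s) => f _; apply/ffunP => i; rewrite !ffunE ?sK ?s'K.
apply: eq_big => f.
  apply/injectiveP/injectiveP => f_inj i j.
    move=> fij; rewrite -(sK i) -(sK j); congr s'.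
    by apply: f_inj; rewrite !ffunE !sK.
  by rewrite !ffunE => /f_inj /s'_inj.
by move=> _; congr F; apply/ffunP => i; rewrite !ffunE sK.
Qed.

Lemma sum_inj_count_pullback (T : finType) (X : pred (rel 'I_h)) (e : rel T) :
  \sum_(f : {ffun 'I_h -> T} | injectiveb f) inj_count X (pullback e f) = h`! * inj_count X e.
Proof.
rewrite /inj_count exchange_big /=.
rewrite (eq_bigr (fun=> inj_count X e)) => [|s /injectiveP s_inj]; last first.
  rewrite /inj_count -(sum_inj_precomp (fun f => X (pullback e f)) s_inj).
  apply: eq_bigr => f _; congr X.
  by rewrite -[pullback _ s]/(pullback e (f \o s)); apply: eq_pullback => i; rewrite ffunE.
by rewrite -card_inj_perm -sum_nat_const; apply: eq_bigl => s; rewrite inE.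
Qed.

Lemma card_imset_inj (T : finType) (f : {ffun 'I_h -> T}) : injectiveb f -> #|f @: setT| = h.
Proof. by move/injectiveP => f_inj; rewrite card_imset // cardsT card_ord. Qed.

Lemma imset_inj_eq (T : finType) (f : {ffun 'I_h -> T}) (S : {set T}) :
  injectiveb f -> #|S| = h -> {subset codom f <= S} -> f @: setT = S.
Proof.
move=> f_inj S_card fS; apply/eqP; rewrite eqEcard card_imset_inj // S_card leqnn andbT.
by apply/subsetP => _ /imsetP [x _ ->]; apply: fS; apply: codom_f.
Qed.

Lemma isomorphicb_pullback (T : finType) (e : rel T) (H : rel 'I_h) (f : {ffun 'I_h -> T}) :
  injectiveb f -> isomorphicb H (pullback e f) = induced_iso e H (f @: setT).
Proof.
move=> f_inj; apply/existsP/existsP => [[s /andP [/injectiveP s_inj /forallP s_iso]] |].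
  have fs_inj : injectiveb [ffun i => f (s i)].
    by apply/injectiveP => i j; rewrite !ffunE => /(injectiveP _ f_inj) /s_inj.
  exists [ffun i => f (s i)]; rewrite fs_inj /=; apply/andP; split.
    apply/eqP; apply: imset_inj_eq; rewrite ?card_imset_inj // => _ /codomP [i ->].
    by rewrite ffunE imset_f.
  by apply/forallP => i; apply/forallP => j; rewrite !ffunE; apply: (forallP (s_iso i)).
move=> [g /and3P [/injectiveP g_inj /eqP g_im /forallP g_iso]].
have g_in_codom i : g i \in codom f.
  have : g i \in f @: setT by rewrite -g_im imset_f.
  by case/imsetP => x _ ->; apply: codom_f.
pose s := [ffun i => iinv (g_in_codom i)].
have fs i : f (s i) = g i by rewrite ffunE f_iinv.
exists s; apply/andP; split.
  by apply/injectiveP => i j sij; apply: g_inj; rewrite -!fs sij.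
by apply/forallP => i; apply/forallP => j; rewrite /pullback !fs; apply: (forallP (g_iso i)).
Qed.

Lemma card_induced_fact (T : finType) (e : rel T) (H : rel 'I_h) :
  #|[set S : {set T} | (#|S| == h) && induced_iso e H S]| * h`! =
  inj_count (isomorphicb H) e.
Proof.
rewrite -card_inj_pullback -[in RHS]sum1dep_card.
rewrite (partition_big (fun f : {ffun 'I_h -> T} => f @: setT)
           (fun S => (#|S| == h) && induced_iso e H S)) /=; last first.
  by move=> f /andP [f_inj f_iso]; rewrite card_imset_inj // -isomorphicb_pullback ?eqxx.
rewrite -sum1dep_card big_distrl /=; apply: eq_bigr => S /andP [/eqP S_card S_ind].
rewrite mul1n sum1dep_card.
have <- : #|[set f : {ffun 'I_h -> T} in ffun_on (mem S) | injectiveb f]| = h`!.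
  by rewrite card_inj_ffuns_on card_ord S_card ffactnn.
apply: eq_card => f; rewrite !inE; case f_inj: (injectiveb f); rewrite ?andbF //=.
rewrite andbT isomorphicb_pullback //.
apply/forallP/andP => [f_on | [_ /eqP <- x]]; last by rewrite imset_f.
have f_im : f @: setT = S by apply: imset_inj_eq => // _ /codomP [x ->]; apply: f_on.
by rewrite f_im eqxx.
Qed.

End LabelledGraphs.

Definition seq_fun (U : Type) (h : nat) (x0 : U) (s : seq U) (i : 'I_h) : U := nth x0 s i.

Lemma injectiveb_seq_fun (U : eqType) (h : nat) (x0 : U) (s : seq U) :
  size s = h -> injectiveb (seq_fun x0 s : 'I_h -> U) = uniq s.
Proof.
move=> s_size; rewrite /injectiveb /dinjectiveb.
by rewrite -[in RHS](mkseq_nth x0 s) s_size /mkseq -val_enum_ord -map_comp.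
Qed.

Lemma injectiveb_finfun (aT : finType) (rT : eqType) (g : aT -> rT) :
  injectiveb (finfun g) = injectiveb g.
Proof. by congr uniq; apply: eq_map => i; rewrite ffunE. Qed.

Definition o0 : 'I_4 := @Ordinal 4 0 isT.
Definition o1 : 'I_4 := @Ordinal 4 1 isT.
Definition o2 : 'I_4 := @Ordinal 4 2 isT.
Definition o3 : 'I_4 := @Ordinal 4 3 isT.

Lemma ord4P (i : 'I_4) : [\/ i = o0, i = o1, i = o2 | i = o3].
Proof.
case: i => -[|[|[|[|//]]]] i_lt;
  [apply: Or41 | apply: Or42 | apply: Or43 | apply: Or44]; exact: val_inj.
Qed.

Lemma ord2P (i : 'I_2) : i = ord0 \/ i = ord_max.
Proof. by case: i => -[|[|//]] i_lt; [left | right]; apply: val_inj. Qed.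

Definition tuple4 (U : Type) (a b c d : U) : 'I_4 -> U := seq_fun a [:: a; b; c; d].

Lemma big_ffun4 (U : finType) (F : {ffun 'I_4 -> U} -> nat) :
  \sum_f F f = \sum_a \sum_b \sum_c \sum_d F (finfun (tuple4 a b c d)).
Proof.
rewrite (reindex (fun x : U * U * U * U => finfun (tuple4 x.1.1.1 x.1.1.2 x.1.2 x.2))) /=.
  by rewrite !pair_bigA.
exists (fun f : {ffun 'I_4 -> U} => (f o0, f o1, f o2, f o3)) => [[[[a b] c] d] _ | f _].
  by rewrite !ffunE.
by apply/ffunP => i; rewrite ffunE; case: (ord4P i) => ->.
Qed.

Lemma big_ffun2 (U : finType) (F : {ffun 'I_2 -> U} -> nat) :
  \sum_f F f = \sum_a \sum_b F (finfun (seq_fun a [:: a; b])).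
Proof.
rewrite (reindex (fun x : U * U => finfun (seq_fun x.1 [:: x.1; x.2]))) /=.
  by rewrite pair_bigA.
exists (fun f : {ffun 'I_2 -> U} => (f ord0, f ord_max)) => [[a b] _ | f _].
  by rewrite !ffunE.
by apply/ffunP => i; rewrite ffunE; case: (ord2P i) => ->.
Qed.

Lemma subgraphb_K2 (T : finType) (e : rel T) (a b : T) : symmetric e ->
  subgraphb K2 (pullback e (finfun (seq_fun a [:: a; b]))) = e a b.
Proof.
move=> e_sym; apply/forallP/idP => [K2_sub | eab u].
  by have := forallP (K2_sub ord0) ord_max; rewrite /pullback !ffunE.
apply/forallP => v; rewrite /pullback !ffunE.
by case: (ord2P u) => ->; case: (ord2P v) => -> //=; rewrite e_sym.
Qed.

Lemma inj_count_K2 (T : finType) (e : rel T) : symmetric e ->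
  inj_count (subgraphb K2) e = \sum_a \sum_b ((a != b) && e a b).
Proof.
move=> e_sym; rewrite /inj_count big_mkcond big_ffun2.
apply: eq_bigr => a _; apply: eq_bigr => b _.
by rewrite injectiveb_finfun injectiveb_seq_fun //= inE andbT subgraphb_K2 //; case: (a != b).
Qed.

Lemma sum_uniq_rcons (T : finType) (s : seq T) :
  \sum_x uniq (rcons s x) = uniq s * (#|T| - size s).
Proof.
under eq_bigr do rewrite rcons_uniq.
case s_uniq: (uniq s); last by rewrite big1 // => x _; rewrite andbF.
rewrite mul1n -(card_uniqP s_uniq) -(cardC (mem s)) addKn -sum1_card [RHS]big_mkcond /=.
by apply: eq_bigr => x _; rewrite andbT !inE; case: (x \in s).
Qed.

Definition edge01 (c : rel 'I_4) : bool := c o0 o1.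

Lemma inj_count_edge01 (T : finType) (e : rel T) : symmetric e ->
  inj_count edge01 e = inj_count (subgraphb K2) e * ((#|T| - 2) * (#|T| - 3)).
Proof.
move=> e_sym; rewrite inj_count_K2 // big_distrl /=.
rewrite /inj_count big_mkcond big_ffun4; apply: eq_bigr => a _.
rewrite big_distrl; apply: eq_bigr => b _ /=.
rewrite (eq_bigr (fun c => e a b * (uniq [:: a; b; c] * (#|T| - 3)))) => [|c _]; last first.
  rewrite -(sum_uniq_rcons [:: a; b; c]) big_distrr; apply: eq_bigr => d _.
  rewrite injectiveb_finfun injectiveb_seq_fun // /edge01 /pullback !ffunE /=.
  by case: ifP => _; rewrite /tuple4 /seq_fun /= ?muln1 ?muln0.
rewrite -big_distrr -big_distrl (sum_uniq_rcons [:: a; b]) /= inE andbT.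
by case: (a != b); case: (e a b); rewrite ?mul0n ?mul1n.
Qed.

(* Fintype quantifiers and big operators are locked and do not reduce under [vm_compute];
   [ords], [subgraph4], [eqrel4] and [perm_count4] are their list-based counterparts on 'I_4. *)
Definition ords : seq 'I_4 := [:: o0; o1; o2; o3].

Lemma mem_ords (i : 'I_4) : i \in ords.
Proof. by case: (ord4P i) => ->. Qed.

Lemma sum_ord4 (F : 'I_4 -> nat) : \sum_i F i = sumn (map F ords).
Proof.
rewrite sumnE big_map (big_uniq ords); last by [].
by apply: eq_bigl => i; rewrite mem_ords.
Qed.

Lemma forall_ord4 (P : pred 'I_4) : [forall i, P i] = all P ords.
Proof.
by apply/forallP/allP => [P_all i _ | P_ords i]; [apply: P_all | apply: P_ords (mem_ords i)].
Qed.

Definition subgraph4 (H c : rel 'I_4) : bool :=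
  all (fun u => all (fun v => H u v ==> c u v) ords) ords.

Definition eqrel4 (H c : rel 'I_4) : bool :=
  all (fun u => all (fun v => H u v == c u v) ords) ords.

Lemma subgraphb4E (H : rel 'I_4) : subgraphb H =1 subgraph4 H.
Proof. by move=> c; rewrite /subgraphb forall_ord4; apply: eq_all => u; rewrite forall_ord4. Qed.

Lemma eqrelb4E (H : rel 'I_4) : eqrelb H =1 eqrel4 H.
Proof. by move=> c; rewrite /eqrelb forall_ord4; apply: eq_all => u; rewrite forall_ord4. Qed.

Definition perm_count4 (X : pred (rel 'I_4)) (c : rel 'I_4) : nat :=
  sumn [seq sumn [seq sumn [seq sumn [seq nat_of_bool
      (uniq [:: a; b; x; d] && X (pullback c (tuple4 a b x d)))
    | d <- ords] | x <- ords] | b <- ords] | a <- ords].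

Lemma inj_count4E (X Y : pred (rel 'I_4)) (c : rel 'I_4) :
  X =1 Y -> inj_count X c = perm_count4 Y c.
Proof.
move=> XY; rewrite /inj_count big_mkcond big_ffun4 sum_ord4; congr sumn; apply: eq_map => a.
rewrite sum_ord4; congr sumn; apply: eq_map => b.
rewrite sum_ord4; congr sumn; apply: eq_map => x.
rewrite sum_ord4; congr sumn; apply: eq_map => d.
rewrite injectiveb_finfun injectiveb_seq_fun // XY (eq_pullback c (ffunE (tuple4 a b x d))).
by case: (uniq [:: a; b; x; d]).
Qed.

Definition rel4 (b01 b02 b03 b12 b13 b23 : bool) : rel 'I_4 := fun i j =>
  match nat_of_ord i, nat_of_ord j with
  | 0, 1 | 1, 0 => b01 | 0, 2 | 2, 0 => b02 | 0, 3 | 3, 0 => b03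
  | 1, 2 | 2, 1 => b12 | 1, 3 | 3, 1 => b13 | 2, 3 | 3, 2 => b23
  | _, _ => false
  end.

(* Evaluating the edge lists of [mkG] is slow under [vm_compute], so the pattern graphs are
   first tabulated by their six edge bits. *)
Definition normal4 (c : rel 'I_4) : rel 'I_4 :=
  rel4 (c o0 o1) (c o0 o2) (c o0 o3) (c o1 o2) (c o1 o3) (c o2 o3).

Lemma normal4E (c : rel 'I_4) : symmetric c -> irreflexive c -> normal4 c = c.
Proof.
move=> c_sym c_irr; apply: functional_extensionality => i.
apply: functional_extensionality => j.
by case: (ord4P i) => ->; case: (ord4P j) => ->; rewrite /normal4 /rel4 /= ?c_irr // c_sym.
Qed.

Lemma mkG_sym (h : nat) (s : seq (nat * nat)) : symmetric (mkG (h := h) s).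
Proof. by move=> i j; rewrite /mkG eq_sym orbC. Qed.

Lemma mkG_irr (h : nat) (s : seq (nat * nat)) : irreflexive (mkG (h := h) s).
Proof. by move=> i; rewrite /mkG eqxx. Qed.

Lemma complG_sym (h : nat) (H : rel 'I_h) : symmetric H -> symmetric (complG H).
Proof. by move=> H_sym i j; rewrite /complG eq_sym H_sym. Qed.

Lemma complG_irr (h : nat) (H : rel 'I_h) : irreflexive (complG H).
Proof. by move=> i; rewrite /complG eqxx. Qed.

(* The weights of [wsum], scaled by 48. *)
Definition weights : seq (nat * rel 'I_4) :=
  [:: (48, K4); (24, complG K4); (20, D4); (20, complG D4); (16, P3); (8, complG P3);
      (24, C4); (16, complG C4); (12, K13); (12, complG K13); (12, P4)].

Lemma normal4_weights : [seq (wH.1, normal4 wH.2) | wH <- weights] = weights.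
Proof.
rewrite /= !normal4E //;
  by [apply: mkG_sym | apply: mkG_irr | apply: complG_irr | apply/complG_sym/mkG_sym].
Qed.

Definition weighted_iso (c : rel 'I_4) : nat :=
  \sum_(wH <- weights) wH.1 * isomorphicb wH.2 c.

Lemma weighted_iso_identity (c : rel 'I_4) : symmetric c -> irreflexive c ->
  weighted_iso c + inj_count edge01 c = 24 + 2 * inj_count (subgraphb C4) c.
Proof.
move=> c_sym c_irr.
rewrite /weighted_iso -normal4_weights big_map !big_cons big_nil /= !isomorphicbE.
rewrite !(inj_count4E _ (eqrelb4E _)) (inj_count4E _ (subgraphb4E _)) (inj_count4E _ (frefl _)).
rewrite -(normal4E c_sym c_irr) /normal4.
case: (c o0 o1); case: (c o0 o2); case: (c o0 o3);
  case: (c o1 o2); case: (c o1 o3); case: (c o2 o3); by vm_compute.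
Qed.

Definition weighted_iso_count (T : finType) (e : rel T) : nat :=
  \sum_(wH <- weights) wH.1 * inj_count (isomorphicb wH.2) e.

Lemma sum_weighted_iso (T : finType) (e : rel T) :
  \sum_(f : {ffun 'I_4 -> T} | injectiveb f) weighted_iso (pullback e f) = weighted_iso_count e.
Proof.
rewrite /weighted_iso /weighted_iso_count; elim: weights => [|wH ws IH].
  by rewrite big_nil big1 // => f _; rewrite big_nil.
rewrite big_cons -IH /inj_count big_distrr -big_split /=.
by apply: eq_bigr => f _; rewrite big_cons.
Qed.

Lemma weighted_iso_count_identity (T : finType) (e : rel T) : symmetric e -> irreflexive e ->
  weighted_iso_count e + 24 * inj_count edge01 e =
  24 * #|T| ^_ 4 + 48 * inj_count (subgraphb C4) e.
Proof.
move=> e_sym e_irr.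
have sum_id : \sum_(f : {ffun 'I_4 -> T} | injectiveb f)
      (weighted_iso (pullback e f) + inj_count edge01 (pullback e f)) =
    \sum_(f : {ffun 'I_4 -> T} | injectiveb f)
      (24 + 2 * inj_count (subgraphb C4) (pullback e f)).
  apply: eq_bigr => f _.
  by apply: weighted_iso_identity => [i j | i]; [apply: e_sym | apply: e_irr].
rewrite big_split sum_weighted_iso sum_inj_count_pullback in sum_id.
rewrite big_split -big_distrr sum_inj_count_pullback in sum_id.
have card_inj : #|[set f : {ffun 'I_4 -> T} | injectiveb f]| = #|T| ^_ 4.
  by rewrite card_inj_ffuns card_ord.
have -> : 48 * inj_count (subgraphb C4) e = 2 * (4`! * inj_count (subgraphb C4) e).
  by rewrite mulnA.
rewrite -card_inj [24 * #|_|]mulnC -sum_nat_const [LHS]sum_id.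
by congr (_ + _); apply: eq_bigl => f; rewrite inE.
Qed.

Local Open Scope ring_scope.

Lemma t_injE (T : finType) (e : rel T) (h : nat) (H : rel 'I_h) :
  t_inj e H = (inj_count (subgraphb H) e)%:R / (#|T| ^_ h)%:R.
Proof. by rewrite -card_inj_pullback. Qed.

Lemma p_indE (T : finType) (e : rel T) (h : nat) (H : rel 'I_h) :
  p_ind e H = (inj_count (isomorphicb H) e)%:R / (#|T| ^_ h)%:R.
Proof.
rewrite /p_ind -card_induced_fact -bin_ffact !natrM.
have fact_neq0 : (h`!)%:R != 0 :> rat by rewrite pnatr_eq0 -lt0n fact_gt0.
by rewrite -mulf_div divff // mulr1.
Qed.

Lemma ffact4_split (n : nat) : (4 <= n)%N -> n ^_ 4 = (n ^_ 2 * ((n - 2) * (n - 3)))%N.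
Proof.
by case: n => [|[|[|[|n]]]] // _; rewrite !ffactnS !ffactn0 /= !subSS !subn0 !muln1 !mulnA.
Qed.

Lemma t_inj_K2E (T : finType) (e : rel T) : symmetric e -> (4 <= #|T|)%N ->
  t_inj e K2 = (inj_count edge01 e)%:R / (#|T| ^_ 4)%:R.
Proof.
move=> e_sym n_ge4; rewrite t_injE inj_count_edge01 // ffact4_split //.
have ext_neq0 : ((#|T| - 2) * (#|T| - 3))%:R != 0 :> rat.
  by rewrite pnatr_eq0 muln_eq0 !subn_eq0 negb_or -!ltnNge; apply/andP; split; lia.
by rewrite !(natrM _ _ ((#|T| - 2) * (#|T| - 3))) -mulf_div divff // mulr1.
Qed.

Lemma weights_average (p : rel 'I_4 -> rat) :
  1 * p K4 + 1/2 * p (complG K4) + 5/12 * p D4 + 5/12 * p (complG D4) + 1/3 * p P3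
  + 1/6 * p (complG P3) + 1/2 * p C4 + 1/3 * p (complG C4) + 1/4 * p K13
  + 1/4 * p (complG K13) + 1/4 * p P4 = \sum_(wH <- weights) wH.1%:R / 48 * p wH.2.
Proof. by rewrite /weights !big_cons big_nil; cbn [fst snd]; field. Qed.

Lemma wsumE (T : finType) (e : rel T) : (4 <= #|T|)%N ->
  wsum e = (weighted_iso_count e)%:R / (48 * (#|T| ^_ 4)%:R).
Proof.
move=> n_ge4; have N_neq0 : (#|T| ^_ 4)%:R != 0 :> rat by rewrite pnatr_eq0 -lt0n ffact_gt0.
rewrite [LHS]weights_average /weighted_iso_count natr_sum mulr_suml; apply: eq_bigr => wH _.
by rewrite p_indE natrM; field.
Qed.

Lemma wsum_phi (T : finType) (e : rel T) : symmetric e -> irreflexive e -> (4 <= #|T|)%N ->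
  wsum e = phi e / 2 + 5 / 16.
Proof.
move=> e_sym e_irr n_ge4; have N_neq0 : (#|T| ^_ 4)%:R != 0 :> rat.
  by rewrite pnatr_eq0 -lt0n ffact_gt0.
have /(congr1 (fun n : nat => n%:R : rat)) := weighted_iso_count_identity e_sym e_irr.
rewrite (natrD _ (weighted_iso_count e)) (natrD _ (24 * #|T| ^_ 4)).
rewrite (natrM _ 24 (inj_count edge01 e)) (natrM _ 24 (#|T| ^_ 4)) (natrM _ 48).
move=> /(canRL (addrK _)) W_eq.
rewrite wsumE // /phi t_injE t_inj_K2E // W_eq.
by field.
Qed.

Theorem lemma2p1 (T : finType) (e : rel T)
    (e_sym : symmetric e) (e_irr : irreflexive e) (hn : (4 <= #|T|)%N) :
  (wsum e <= 5/16) <-> (phi e <= 0).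
Proof. by rewrite wsum_phi //; split => ?; lra. Qed.
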